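(* Let $\lambda\ge 1$, $n$, $0<R\le\sqrt n$, $m=\lceil\sqrt{5n}/R\rceil$, and partition $[0,\sqrt n]^2$ into $m\times m$ congruent square cells. Let $n$ nodes be placed at points of the square such that every cell contains at least $R^2/\lambda$ and at most $\lambda R^2$ nodes, and let $G$ be the graph on the nodes joining two nodes iff their Euclidean distance is at most $R$. Then, with $\alpha=1/(2\lambda)$, $G$ is an $(h,\alpha R^2/h)$-expander for every $1\le h\le\alpha R^2$.
   Context: For a graph $G$ on $[n]$ and $I\subseteq[n]$, $N(I)$ is the set of nodes outside $I$ adjacent to some node of $I$. $G$ is an $(h,k)$-expander if every $I$ with $|I|\le h$ satisfies $|N(I)|\ge k|I|$. Each node belongs to exactly one cell. *)

From mathcomp Require Import all_boot.
From Stdlib Require Import Reals.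
Set Implicit Arguments. Unset Strict Implicit. Unset Printing Implicit Defensive.

Definition nbhd (T : finType) (adj : rel T) (I : {set T}) : {set T} :=
  [set y | (y \notin I) && [exists x in I, adj x y]].

Definition expander (T : finType) (adj : rel T) (h k : R) : Prop :=
  forall I : {set T}, (INR #|I| <= h)%R -> (k * INR #|I| <= INR #|nbhd adj I|)%R.

Definition dist2 (x1 y1 x2 y2 : R) : R :=
  sqrt ((x1 - x2) ^ 2 + (y1 - y2) ^ 2).

Definition geo_adj (n : nat) (px py : 'I_n -> R) (r : R) : rel 'I_n :=
  fun u v => (u != v) && (if Rle_dec (dist2 (px u) (py u) (px v) (py v)) r then true else false).

(* A nonempty set I contains some node v. The cell of v has side s with
   5 s^2 <= R^2, so its diameter is at most R and every other node of that cell
   is a neighbour of v. The cell holds at least R^2/lambda = 2 alpha R^2 nodes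
   while |I| <= h <= alpha R^2, hence
   |N(I)| >= 2 alpha R^2 - h >= alpha R^2 >= (alpha R^2 / h) |I|. *)
From mathcomp Require Import all_boot.
From Stdlib Require Import Reals Lra Psatz.

Set Implicit Arguments.
Unset Strict Implicit.

Lemma sqr_sub_le_interval (a s x y : R) :
  (a * s <= x <= (a + 1) * s)%R -> (a * s <= y <= (a + 1) * s)%R ->
  ((x - y) ^ 2 <= s ^ 2)%R.
Proof. by move=> *; nra. Qed.

Lemma dist2_le_same_cell (a b s r x1 y1 x2 y2 : R) :
  (a * s <= x1 <= (a + 1) * s)%R -> (a * s <= x2 <= (a + 1) * s)%R ->
  (b * s <= y1 <= (b + 1) * s)%R -> (b * s <= y2 <= (b + 1) * s)%R ->
  (0 <= r)%R -> (2 * s ^ 2 <= r ^ 2)%R ->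
  (dist2 x1 y1 x2 y2 <= r)%R.
Proof.
move=> Hx1 Hx2 Hy1 Hy2 r_ge0 Hs.
have Ex := sqr_sub_le_interval Hx1 Hx2.
have Ey := sqr_sub_le_interval Hy1 Hy2.
rewrite /dist2 -(sqrt_pow2 r r_ge0).
by apply: sqrt_le_1_alt; lra.
Qed.

Lemma sqr_cell_side_le (k N r m : R) :
  (0 <= k)%R -> (0 <= N)%R -> (0 < r)%R -> (0 < m)%R ->
  (sqrt (k * N) / r <= m)%R -> (k * (sqrt N / m) ^ 2 <= r ^ 2)%R.
Proof.
move=> k_ge0 N_ge0 r_gt0 m_gt0 Hm.
have Hsqrt : (sqrt (k * N) <= m * r)%R.
  by apply/(Rmult_le_reg_r (/ r)); [apply: Rinv_0_lt_compat | rewrite Rmult_assoc Rinv_r; lra].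
have HkN : (k * N <= (m * r) ^ 2)%R.
  rewrite -(sqrt_sqrt (k * N)); last exact: Rmult_le_pos.
  by have := sqrt_pos (k * N); nra.
rewrite /Rdiv Rpow_mult_distr pow2_sqrt // pow_inv.
apply: (Rmult_le_reg_r (m ^ 2)); first nra.
by rewrite -Rmult_assoc Rmult_assoc Rinv_l; nra.
Qed.

Lemma geo_adj_le (n : nat) (px py : 'I_n -> R) (r : R) (u v : 'I_n) :
  u != v -> (dist2 (px u) (py u) (px v) (py v) <= r)%R -> geo_adj px py r u v.
Proof. by rewrite /geo_adj => -> Hd /=; case: Rle_dec. Qed.

Lemma card_le_nbhd_add (T : finType) (adj : rel T) (I C : {set T}) (v : T) :
  v \in I -> (forall u, u \in C -> u \notin I -> adj v u) ->
  (#|C| <= #|nbhd adj I| + #|I|)%N.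
Proof.
move=> vI Cadj.
have CI_nbhd : C :\: I \subset nbhd adj I.
  apply/subsetP => u; rewrite !inE => /andP [uI uC].
  by rewrite uI; apply/existsP; exists v; rewrite vI Cadj.
rewrite -(cardsID I C) addnC leq_add // ?subset_leq_card ?subsetIr //.
Qed.

Lemma expansion_arith (k h c i N : R) :
  (1 <= h <= k)%R -> (2 * k <= c)%R -> (c <= N + i)%R -> (0 <= i <= h)%R ->
  (k / h * i <= N)%R.
Proof.
move=> [h_ge1 h_le_k] Hc HN [i_ge0 i_le_h].
have : (k / h * i <= k)%R.
  rewrite /Rdiv Rmult_assoc -{2}(Rmult_1_r k).
  apply: Rmult_le_compat_l; first lra.
  apply: (Rmult_le_reg_l h); first lra.
  by rewrite -Rmult_assoc Rinv_r; lra.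
lra.
Qed.

Theorem mainTheorem5 (lam Rad : R) (n m : nat)
  (px py : 'I_n -> R) (c : 'I_n -> 'I_m * 'I_m) :
  (1 <= lam)%R ->
  (0 < Rad)%R -> (Rad <= sqrt (INR n))%R ->
  (INR m - 1 < sqrt (5 * INR n) / Rad <= INR m)%R ->
  (forall v, 0 <= px v <= sqrt (INR n) /\ 0 <= py v <= sqrt (INR n))%R ->
  (forall v,
     INR (nat_of_ord (c v).1) * (sqrt (INR n) / INR m) <= px v
       <= INR (nat_of_ord (c v).1 + 1) * (sqrt (INR n) / INR m) /\
     INR (nat_of_ord (c v).2) * (sqrt (INR n) / INR m) <= py v
       <= INR (nat_of_ord (c v).2 + 1) * (sqrt (INR n) / INR m))%R ->
  (forall ij : 'I_m * 'I_m,
     Rad ^ 2 / lam <= INR #|[set v | c v == ij]| <= lam * Rad ^ 2)%R ->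
  forall h : R, (1 <= h <= (1 / (2 * lam)) * Rad ^ 2)%R ->
    expander (geo_adj px py Rad) h ((1 / (2 * lam)) * Rad ^ 2 / h)%R.
Proof.
move=> lam_ge1 Rad_gt0 _ [_ Hm] _ Hcell Hcnt h Hh I HI.
have [->|[v vI]] := set_0Vmem I.
  by rewrite cards0 Rmult_0_r; apply: pos_INR.
have m_gt0 : (0 < INR m)%R.
  by apply/lt_0_INR/ltP; case: (c v).1 => i /(leq_ltn_trans _); apply.
have Hside : (5 * (sqrt (INR n) / INR m) ^ 2 <= Rad ^ 2)%R.
  by apply: (sqr_cell_side_le _ (pos_INR n) Rad_gt0 m_gt0 Hm); lra.
have cell_adj u : u \in [set u | c u == c v] -> u \notin I -> geo_adj px py Rad v u.
  rewrite inE => /eqP cu uI.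
  apply: geo_adj_le; first by apply: contraNneq uI => <-.
  have [Hx Hy] := Hcell u; have [Hx' Hy'] := Hcell v.
  rewrite cu !plus_INR in Hx Hy; rewrite !plus_INR in Hx' Hy'.
  by apply: (dist2_le_same_cell Hx' Hx Hy' Hy); nra.
have Hcard := le_INR _ _ (leP (card_le_nbhd_add vI cell_adj)).
rewrite plus_INR in Hcard.
have [Hlow _] := Hcnt (c v).
apply: (expansion_arith Hh _ Hcard (conj (pos_INR _) HI)).
by apply: Rle_trans Hlow; right; field; lra.
Qed.
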